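(* Let $X$ be a complex Banach space, $\mathcal{F}$ an algebra with unit, $\mathcal{E}\subseteq\mathcal{F}$ a (not necessarily unital) subalgebra, and $\Phi:\mathcal{E}\to\mathcal{L}(X)$ an algebra homomorphism such that $\mathcal{F}$ is anchored in $\mathcal{E}$. Then there is a unique calculus $\widehat{\Phi}:\mathcal{F}\to\mathcal{C}(X)$ such that $\widehat{\Phi}|_{\mathcal{E}}=\Phi$.
   Context: $\mathcal{F}$ need not be commutative. $\mathcal{L}(X)$, $\mathcal{C}(X)$: bounded, resp. closed linear operators on $X$; operator inclusions are graph inclusions, sums/products have natural domains, ''$Tx=y$'' means $x\in\mathrm{dom}(T)$, $Tx=y$. For $f\in\mathcal{F}$, $[f]_{\mathcal{E}}=\{e\in\mathcal{E}: ef\in\mathcal{E}\}$; $f$ is anchored in $\mathcal{E}$ (w.r.t. $\Phi$) if $[f]_{\mathcal{E}}\neq\emptyset$ and $\bigcap_{e\in[f]_{\mathcal{E}}}\ker\Phi(e)=\{0\}$; $\mathcal{F}$ is anchored in $\mathcal{E}$ if every $f\in\mathcal{F}$ is. A proto-calculus is a map $\Psi:\mathcal{F}\to\mathcal{C}(X)$ with (FC1) $\Psi(\mathbf{1})=I$; (FC2) $\lambda\Psi(f)\subseteq\Psi(\lambda f)$, $\Psi(f)+\Psi(g)\subseteq\Psi(f+g)$; (FC3) $\Psi(f)\Psi(g)\subseteq\Psi(fg)$ with $\mathrm{dom}(\Psi(f)\Psi(g))=\mathrm{dom}(\Psi(g))\cap\mathrm{dom}(\Psi(fg))$. It is a calculus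 if in addition, with $\mathrm{bdd}=\{g:\Psi(g)\in\mathcal{L}(X)\}$ and $\mathrm{reg}(f,\Psi)=\{e: e,ef\in\mathrm{bdd}\}$, for every $f\in\mathcal{F}$ and $x,y\in X$: $\Psi(f)x=y\iff\Psi(ef)x=\Psi(e)y$ for all $e\in\mathrm{reg}(f,\Psi)$. *)

From HB Require Import structures.
From mathcomp Require Import all_boot all_order all_algebra.
From mathcomp Require Import complex.
From mathcomp Require Import all_classical all_reals topology normedtype.
Import numFieldNormedType.Exports.
Set Implicit Arguments. Unset Strict Implicit. Unset Printing Implicit Defensive.
Import GRing.Theory.
Local Open Scope ring_scope.
Local Open Scope classical_set_scope.

(* Operators on a space X are represented by their graphs (subsets of X*X).
   Operator inclusion = graph inclusion; sums / products / scalar multiples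
   carry their natural domains. *)
Definition op (X : Type) := set (X * X).

Section Operators.
Variables (K : numFieldType) (X : normedModType K).

Definition is_operator (T : op X) : Prop :=
  [/\ T (0, 0),
      (forall x y x' y', T (x, y) -> T (x', y') -> T (x + x', y + y')),
      (forall (a : K) x y, T (x, y) -> T (a *: x, a *: y))
    & (forall x y y', T (x, y) -> T (x, y') -> y = y')].

Definition dom (T : op X) : set X := [set x | exists y, T (x, y)].

Definition closed_op (T : op X) : Prop := is_operator T /\ closed T.

Definition bounded_op (T : op X) : Prop :=
  is_operator T /\
  exists g : X -> X, continuous g /\ (forall x y, T (x, y) <-> y = g x).

Definition op_id : op X := [set p | p.2 = p.1].
Definition op_scale (a : K) (T : op X) : op X :=
  [set p | exists y, T (p.1, y) /\ p.2 = a *: y].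
Definition op_add (T S : op X) : op X :=
  [set p | exists y z, T (p.1, y) /\ S (p.1, z) /\ p.2 = y + z].
(* op_mul T S = T S (first apply S, then T) *)
Definition op_mul (T S : op X) : op X :=
  [set p | exists y, S (p.1, y) /\ T (y, p.2)].

(* "T x = S y": x in dom T, y in dom S and T x = S y *)
Definition op_eq_app (T : op X) (x : X) (S : op X) (y : X) : Prop :=
  exists z, T (x, z) /\ S (y, z).
End Operators.

Section Calculus.
Variables (R : realType) (X : normedModType R[i]) (F : algType R[i]).

Definition is_subalgebra (E : set F) : Prop :=
  [/\ E 0,
      (forall e e', E e -> E e' -> E (e + e')),
      (forall (a : R[i]) e, E e -> E (a *: e))
    & (forall e e', E e -> E e' -> E (e * e'))].

(* Phi : E -> L(X) an algebra homomorphism (values outside E are irrelevant) *)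
Definition is_alg_hom_on (E : set F) (Phi : F -> op X) : Prop :=
  [/\ (forall e, E e -> bounded_op (Phi e)),
      (forall e e', E e -> E e' -> Phi (e + e') = op_add (Phi e) (Phi e')),
      (forall (a : R[i]) e, E e -> Phi (a *: e) = op_scale a (Phi e))
    & (forall e e', E e -> E e' -> Phi (e * e') = op_mul (Phi e) (Phi e'))].

(* [f]_E = { e in E : e f in E } *)
Definition regset (E : set F) (f : F) : set F := [set e | E e /\ E (e * f)].

Definition anchored (E : set F) (Phi : F -> op X) (f : F) : Prop :=
  (exists e, regset E f e) /\
  (forall x : X, (forall e, regset E f e -> Phi e (x, 0)) -> x = 0).

Definition F_anchored (E : set F) (Phi : F -> op X) : Prop :=
  forall f, anchored E Phi f.

Definition proto_calculus (Psi : F -> op X) : Prop :=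
  [/\ (forall f, closed_op (Psi f)),
      Psi 1 = @op_id _ X,
      (forall (a : R[i]) f, op_scale a (Psi f) `<=` Psi (a *: f)),
      (forall f g, op_add (Psi f) (Psi g) `<=` Psi (f + g))
    & (forall f g, op_mul (Psi f) (Psi g) `<=` Psi (f * g) /\
         dom (op_mul (Psi f) (Psi g)) = dom (Psi g) `&` dom (Psi (f * g)))].

Definition bdd (Psi : F -> op X) : set F := [set g | bounded_op (Psi g)].

Definition reg (f : F) (Psi : F -> op X) : set F :=
  [set e | bdd Psi e /\ bdd Psi (e * f)].

Definition calculus (Psi : F -> op X) : Prop :=
  proto_calculus Psi /\
  forall f (x y : X),
    Psi f (x, y) <->
    (forall e, reg f Psi e -> op_eq_app (Psi (e * f)) x (Psi e) y).
End Calculus.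

From HB Require Import structures.
From mathcomp Require Import all_boot all_order all_algebra.
From mathcomp Require Import complex.
From mathcomp Require Import all_classical all_reals topology normedtype.
Import numFieldNormedType.Exports.
Import GRing.Theory.
Set Implicit Arguments. Unset Strict Implicit. Unset Printing Implicit Defensive.
Local Open Scope ring_scope.
Local Open Scope classical_set_scope.

(** The extension is forced: if a calculus Psi agrees with Phi on E, every
    e in [f]_E is a regularizer of f, so Psi(f)x = y implies Phi(ef)x = Phi(e)y
    for all e in [f]_E.  Taking this condition as the definition of the graph of
    Phi_hat(f), anchoring makes it single valued and boundedness of the Phi(e)
    makes it closed; the rules of a proto-calculus hold because membership may
    be tested on the common regularizers of two elements.  Conversely, when
    Phi_hat(f)x = y and e is a regularizer of f for Psi, the product rule of
    Phi_hat together with Psi <= Phi_hat forces Psi(ef)x = Psi(e)y, whence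
    Phi_hat(f) <= Psi(f). *)

Section BoundedOperators.
Variables (K : numFieldType) (X : normedModType K).
Implicit Types (T S : op X) (x y : X).

(* Junk value 0 outside dom T. *)
Definition op_fun T x : X := xget 0 [set y | T (x, y)].

Lemma op_funE T x y : is_operator T -> T (x, y) -> op_fun T x = y.
Proof.
move=> [_ _ _ single] Txy.
exact: single (xgetPex 0 (ex_intro (fun y => T (x, y)) y Txy)) Txy.
Qed.

Lemma bounded_op_graph T x : bounded_op T -> T (x, op_fun T x).
Proof.
move=> [_ [g [_ Tg]]].
by apply: (xgetPex 0 (P := fun y => T (x, y))); exists (g x); apply/Tg.
Qed.

Lemma bounded_op_continuous T : bounded_op T -> continuous (op_fun T).
Proof.
move=> [opT [g [cg Tg]]].
suff -> : op_fun T = g by [].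
by apply/funext => x; apply: op_funE => //; apply/Tg.
Qed.

Lemma op_fun0 T : bounded_op T -> op_fun T 0 = 0.
Proof. by move=> [opT _]; have [T00 _ _ _] := opT; exact: op_funE opT T00. Qed.

Lemma op_funD T x x' : bounded_op T -> op_fun T (x + x') = op_fun T x + op_fun T x'.
Proof.
move=> bT; have [[_ TD _ _] _] := bT.
exact: op_funE bT.1 (TD _ _ _ _ (bounded_op_graph x bT) (bounded_op_graph x' bT)).
Qed.

Lemma op_funZ T a x : bounded_op T -> op_fun T (a *: x) = a *: op_fun T x.
Proof.
move=> bT; have [[_ _ TZ _] _] := bT.
exact: op_funE bT.1 (TZ _ _ _ (bounded_op_graph x bT)).
Qed.

Lemma op_funB T x x' : bounded_op T -> op_fun T (x - x') = op_fun T x - op_fun T x'.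
Proof. by move=> bT; rewrite op_funD // -scaleN1r op_funZ // scaleN1r. Qed.

Lemma closed_bounded_op_eq T S : bounded_op T -> bounded_op S ->
  closed [set p : X * X | op_fun T p.1 = op_fun S p.2].
Proof.
move=> bT bS.
have -> : [set p : X * X | op_fun T p.1 = op_fun S p.2] =
    (fun p : X * X => op_fun T p.1 - op_fun S p.2) @^-1` [set 0].
  by apply/seteqP; split=> p /= => [-> | /eqP]; [rewrite subrr | rewrite subr_eq0 => /eqP].
apply: (continuous_closedP _).1.
  move=> p; apply: (@continuousB _ _ _ (op_fun T \o fst) (op_fun S \o snd)).
  - by apply: continuous_comp; [exact: cvg_fst | exact: bounded_op_continuous].
  - by apply: continuous_comp; [exact: cvg_snd | exact: bounded_op_continuous].
exact: accessible_closed_set1 (hausdorff_accessible (@norm_hausdorff _ X)) 0.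
Qed.

End BoundedOperators.

Section ProtoCalculus.
Variables (R : realType) (X : normedModType R[i]) (F : algType R[i]).
Implicit Types (Psi Q : F -> op X) (e f : F) (x y : X).

Lemma proto_calculus_reg_app Psi Q f e x y : proto_calculus Psi ->
    (forall g, Q g `<=` Psi g) -> Psi f (x, y) -> reg f Q e ->
  op_eq_app (Q (e * f)) x (Q e) y.
Proof.
move=> [Psi_closed _ _ _ Psi_mul] QPsi fxy [Qe Qef].
have ef_op := (Psi_closed (e * f)).1.
have ef_x := bounded_op_graph x Qef.
have ef_Qe_y : Psi (e * f) (x, op_fun (Q e) y).
  apply: (Psi_mul e f).1; exists y; split=> //.
  by apply: QPsi; exact: bounded_op_graph.
exists (op_fun (Q (e * f)) x); split; first exact: ef_x.
by rewrite -(op_funE ef_op (QPsi _ _ ef_x)) (op_funE ef_op ef_Qe_y); exact: bounded_op_graph.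
Qed.

End ProtoCalculus.

Section Extension.
Variables (R : realType) (X : normedModType R[i]) (F : algType R[i]).
Variables (E : set F) (Phi : F -> op X).
Hypotheses (subE : is_subalgebra E) (homPhi : is_alg_hom_on E Phi)
  (ancPhi : F_anchored E Phi).
Implicit Types (Q : F -> op X) (d e f g h k : F) (x y z w : X).
Local Notation phi e := (op_fun (Phi e)).

Lemma subalg_add e e' : E e -> E e' -> E (e + e').
Proof. by case: subE => _ + _ _; apply. Qed.

Lemma subalg_scale a e : E e -> E (a *: e).
Proof. by case: subE => _ _ + _; apply. Qed.

Lemma subalg_mul e e' : E e -> E e' -> E (e * e').
Proof. by case: subE => _ _ _; apply. Qed.

Lemma subalg_sub e e' : E e -> E e' -> E (e - e').
Proof. by move=> Ee Ee'; rewrite -scaleN1r; exact/subalg_add/subalg_scale. Qed.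

Lemma Phi_bounded e : E e -> bounded_op (Phi e).
Proof. by case: homPhi => + _ _ _; apply. Qed.

Lemma phiD e e' x : E e -> E e' -> phi (e + e') x = phi e x + phi e' x.
Proof.
move=> Ee Ee'; have [_ PhiD _ _] := homPhi.
apply: op_funE; first exact: (Phi_bounded (subalg_add Ee Ee')).1.
rewrite PhiD //; exists (phi e x), (phi e' x).
by split; [exact: bounded_op_graph (Phi_bounded Ee) |
  split; first exact: bounded_op_graph (Phi_bounded Ee')].
Qed.

Lemma phiZ a e x : E e -> phi (a *: e) x = a *: phi e x.
Proof.
move=> Ee; have [_ _ PhiZ _] := homPhi.
apply: op_funE; first exact: (Phi_bounded (subalg_scale a Ee)).1.
by rewrite PhiZ //; exists (phi e x); split; first exact: bounded_op_graph (Phi_bounded Ee).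
Qed.

Lemma phiM e e' x : E e -> E e' -> phi (e * e') x = phi e (phi e' x).
Proof.
move=> Ee Ee'; have [_ _ _ PhiM] := homPhi.
apply: op_funE; first exact: (Phi_bounded (subalg_mul Ee Ee')).1.
by rewrite PhiM //; exists (phi e' x); split; exact: bounded_op_graph (Phi_bounded _).
Qed.

Lemma anchored_inj g u v : (forall d, regset E g d -> phi d u = phi d v) -> u = v.
Proof.
move=> eq_uv; apply/eqP; rewrite -subr_eq0; apply/eqP.
apply: (ancPhi g).2 => d [Ed Edg]; have bd := Phi_bounded Ed.
suff <- : phi d (u - v) = 0 by exact: bounded_op_graph.
by rewrite op_funB // eq_uv // subrr.
Qed.

Definition Phi_hat f : op X :=
  [set p | forall e, regset E f e -> phi (e * f) p.1 = phi e p.2].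

(* For e in [h]_E and d in [e k]_E, d e lies in [h]_E and [k]_E; anchoring cancels d. *)
Lemma Phi_hat_common_regset h k x w :
    (forall e, regset E h e -> regset E k e -> phi (e * h) x = phi e w) ->
  Phi_hat h (x, w).
Proof.
move=> hxw e [Ee Eeh] /=.
apply: (anchored_inj (g := e * k)) => d [Ed Edek].
have Ede := subalg_mul Ed Ee.
rewrite -!phiM // -hxw ?mulrA //.
- by split; rewrite // -mulrA; exact: subalg_mul.
- by split; rewrite // -mulrA.
Qed.

Lemma Phi_hat_E f : E f -> Phi_hat f = Phi f.
Proof.
move=> Ef; have bf := Phi_bounded Ef.
apply/seteqP; split=> -[x y] /= fxy.
- suff -> : y = phi f x by exact: bounded_op_graph.
  apply: (anchored_inj (g := f)) => d fd; have [Ed _] := fd.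
  by rewrite -phiM // fxy.
- by move=> e [Ee Eef]; rewrite phiM // (op_funE bf.1 fxy).
Qed.

Lemma Phi_hat1 : Phi_hat 1 = @op_id _ X.
Proof.
apply/seteqP; split=> -[x y] /= xy.
- by apply: (anchored_inj (g := 1)) => d rd; rewrite -(xy d rd) mulr1.
- by move=> e _; rewrite mulr1 xy.
Qed.

Lemma Phi_hatZ a f : op_scale a (Phi_hat f) `<=` Phi_hat (a *: f).
Proof.
move=> [x w] [y [fxy /= ->]].
apply: (Phi_hat_common_regset (k := f)) => e [Ee _] [_ Eef].
by rewrite -scalerAr phiZ // fxy // op_funZ //; exact: Phi_bounded.
Qed.

Lemma Phi_hatD f g : op_add (Phi_hat f) (Phi_hat g) `<=` Phi_hat (f + g).
Proof.
move=> [x w] [y [z [fxy [gxz /= ->]]]].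
apply: (Phi_hat_common_regset (k := f)) => e [Ee Eefg] [_ Eef].
have Eeg : E (e * g).
  have -> : e * g = e * (f + g) - e * f by rewrite mulrDr addrAC subrr add0r.
  exact: subalg_sub.
by rewrite mulrDr phiD // fxy // gxz // op_funD //; exact: Phi_bounded.
Qed.

Lemma Phi_hatM f g : op_mul (Phi_hat f) (Phi_hat g) `<=` Phi_hat (f * g).
Proof.
move=> [x y] [z [gxz fzy]] /=.
apply: (Phi_hat_common_regset (k := f)) => e [Ee Eefg] ef.
by rewrite mulrA gxz ?fzy //; split; [case: ef | rewrite -mulrA].
Qed.

Lemma Phi_hat_dom_mul f g :
  dom (Phi_hat g) `&` dom (Phi_hat (f * g)) `<=` dom (op_mul (Phi_hat f) (Phi_hat g)).
Proof.
move=> x [[z gxz] [y fgxy]]; exists y, z; split=> //=.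
apply: (Phi_hat_common_regset (k := f * g)) => e [Ee Eef] [_ Eefg].
have ef_g : regset E g (e * f) by split; rewrite // -mulrA.
by rewrite -(gxz _ ef_g) -mulrA fgxy.
Qed.

Lemma Phi_hat_closed f : closed_op (Phi_hat f).
Proof.
split; first split.
- by move=> e [Ee Eef] /=; rewrite !op_fun0 //; exact: Phi_bounded.
- move=> x y x' y' fxy fxy' e ef /=; have [Ee Eef] := ef.
  by rewrite !op_funD ?fxy ?fxy' //; exact: Phi_bounded.
- move=> a x y fxy e ef /=; have [Ee Eef] := ef.
  by rewrite !op_funZ ?fxy //; exact: Phi_bounded.
- move=> x y y' fxy fxy'; apply: (anchored_inj (g := f)) => d fd.
  by rewrite -(fxy d fd) -(fxy' d fd).
apply: closed_bigI => e [Ee Eef].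
exact: closed_bounded_op_eq (Phi_bounded Eef) (Phi_bounded Ee).
Qed.

Lemma Phi_hat_proto : proto_calculus Phi_hat.
Proof.
split; [exact: Phi_hat_closed | exact: Phi_hat1 | exact: Phi_hatZ | exact: Phi_hatD |].
move=> f g; split; first exact: Phi_hatM.
apply/seteqP; split; last exact: Phi_hat_dom_mul.
by move=> x [y fgxy]; split; [case: fgxy => z [gxz _]; exists z | exists y; exact: Phi_hatM].
Qed.

Lemma Phi_hat_of_reg_eq_app Q f x y : (forall e, E e -> Q e = Phi e) ->
    (forall e, reg f Q e -> op_eq_app (Q (e * f)) x (Q e) y) ->
  Phi_hat f (x, y).
Proof.
move=> QE Qf e [Ee Eef].
have [z []] : op_eq_app (Q (e * f)) x (Q e) y.
  by apply: Qf; split; rewrite /bdd /= QE //; exact: Phi_bounded.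
rewrite !QE // => efxz eyz.
by rewrite (op_funE (Phi_bounded Eef).1 efxz) (op_funE (Phi_bounded Ee).1 eyz).
Qed.

Lemma Phi_hat_calculus : calculus Phi_hat.
Proof.
split=> [|f x y]; first exact: Phi_hat_proto.
split=> [fxy e|]; last exact: Phi_hat_of_reg_eq_app Phi_hat_E.
exact: proto_calculus_reg_app Phi_hat_proto (fun g => @subset_refl _ _) fxy.
Qed.

Lemma calculus_sub_Phi_hat Q f : calculus Q -> (forall e, E e -> Q e = Phi e) ->
  Q f `<=` Phi_hat f.
Proof. by move=> [_ Qreg] QE [x y] /(Qreg f x y).1; exact: Phi_hat_of_reg_eq_app. Qed.

Lemma calculus_eq_Phi_hat Q f : calculus Q -> (forall e, E e -> Q e = Phi e) ->
  Q f = Phi_hat f.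
Proof.
move=> Qcalc QE; apply/seteqP; split; first exact: calculus_sub_Phi_hat.
move=> [x y] fxy; apply/(Qcalc.2 f x y) => e.
apply: proto_calculus_reg_app Phi_hat_proto _ fxy => g.
exact: calculus_sub_Phi_hat.
Qed.

End Extension.

Theorem theorem6p1 (R : realType) (X : completeNormedModType R[i])
    (F : algType R[i]) (E : set F) (Phi : F -> op X) :
  is_subalgebra E -> is_alg_hom_on E Phi -> F_anchored E Phi ->
  exists Psi : F -> op X,
    [/\ calculus Psi,
        (forall e, E e -> Psi e = Phi e)
      & (forall Psi' : F -> op X, calculus Psi' ->
           (forall e, E e -> Psi' e = Phi e) -> forall f, Psi' f = Psi f)].
Proof.
move=> subE homPhi ancPhi; exists (Phi_hat E Phi); split.
- exact: Phi_hat_calculus.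
- exact: Phi_hat_E.
- move=> Q Qcalc QE f; exact: calculus_eq_Phi_hat.
Qed.
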